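(* Let $G$ be a near triangulation with outer cycle $C$ and $|V(G)|\le 6$, and let $x,y\in V(C)$ be distinct. Then $G$ contains a Hamiltonian path with ends $x$ and $y$, or one of the following holds: (i) $xy$ is a chord of $C$; (ii) $G$ has a path $xzy$ such that both $xz$ and $zy$ are chords of $C$, and $G-\{x,y,z\}$ consists of $3$ isolated vertices (so $G$ is either the graph with outer cycle $u_1u_2\cdots u_6u_1$ and chords $u_1u_3,u_1u_4,u_1u_5$ with $\{x,y\}=\{u_3,u_5\}$, or the graph with outer cycle $w_1w_2w_3w_4w_5w_1$, an interior vertex $w_6$, and chords $w_2w_4,w_2w_5$ and edges $w_2w_6,w_4w_6,w_5w_6$, with $\{x,y\}=\{w_4,w_5\}$); (iii) $G$ is the graph with outer cycle $u_1u_2\cdots u_6u_1$ and chords $u_1u_3,u_3u_5,u_5u_1$, and $\{x,y\}=\{u_1,u_4\}$ up to the symmetries of this graph (that is, one of $x,y$ has degree $4$ and the other is the degree-$2$ vertex not adjacent to it).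
   Context: A near triangulation is a plane graph in which every face is bounded by a triangle except possibly the outer face, which is bounded by the outer cycle $C$; any plane embedding of $K_2$ also counts as a near triangulation with itself as its outer cycle. A chord of $C$ is an edge of $G$ not in $C$ with both ends on $C$. *)

(* Plane graphs are encoded combinatorially by rotation
   systems (Heffter--Edmonds): a simple graph [adj] on a finite vertex type
   [T], together with, for each vertex v, a cyclic ordering [rot v] of its
   neighbours.  Faces are the orbits of the face permutation [phi] on darts;
   the embedding is plane (genus 0) iff the graph is connected and Euler's
   formula V - E + F = 2 holds. *)
From mathcomp Require Import all_boot fingroup perm.
Set Implicit Arguments. Unset Strict Implicit. Unset Printing Implicit Defensive.

Section PlaneGraphs.
Variable T : finType.
Variable adj : rel T.
Variable rot : T -> {perm T}.

Definition simple_graph : Prop :=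
  (forall u v, adj u v = adj v u) /\ (forall u, ~~ adj u u).

Definition darts : {set T * T} := [set d : T * T | adj d.1 d.2].

Definition rotation_system : Prop :=
  (forall v u, adj v u -> adj v (rot v u)) /\
  (forall v u w, adj v u -> adj v w -> fconnect (rot v) u w).

Definition phi (d : T * T) : T * T := (d.2, rot d.2 d.1).

Definition face (d : T * T) : {set T * T} := [set e | fconnect phi d e].

Definition nfaces : nat := #|[set face d | d in darts]|.

Definition connected_graph : Prop := forall u v, connect adj u v.

(* plane embedding: connected and Euler's formula 2V + 2F = 2E + 4 (#darts = 2E) *)
Definition plane_graph : Prop :=
  [/\ simple_graph, rotation_system, connected_graph &
      2 * #|T| + 2 * nfaces = #|darts| + 4].

(* Outer face = face of the dart d0. *)
Variable d0 : T * T.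

Definition outer_verts : {set T} := [set d.1 | d in face d0].
Definition outer_edge (u v : T) : bool :=
  ((u, v) \in face d0) || ((v, u) \in face d0).

(* near triangulation with outer cycle C bounding the face of d0: all other
   faces have length 3 (i.e. are bounded by triangles, the graph being simple),
   and the boundary walk of the outer face visits pairwise distinct vertices,
   i.e. it is a cycle (or K2, when it has length 2). *)
Definition near_triangulation : Prop :=
  [/\ plane_graph, d0 \in darts,
      {in face d0 &, injective (fun d : T * T => d.1)} &
      forall e, e \in darts -> e \notin face d0 -> #|face e| = 3].

Definition chord (u v : T) : bool :=
  [&& adj u v, ~~ outer_edge u v, u \in outer_verts & v \in outer_verts].

End PlaneGraphs.

Definition ham_path (T : finType) (adj : rel T) (x y : T) : Prop :=
  exists p : seq T,
    [/\ path adj x p, last x p = y, uniq (x :: p) & size (x :: p) = #|T|].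

(* the hexagon u_1 ... u_6 (indices 0..5) *)
Definition hex_cyc (i j : 'I_6) : bool :=
  (val j == (val i).+1 %% 6) || (val i == (val j).+1 %% 6).
(* hexagon plus chords u1u3, u3u5, u5u1 (indices 0,2,4) *)
Definition hex_tri_adj (i j : 'I_6) : bool :=
  hex_cyc i j || [&& i != j, ~~ odd i & ~~ odd j].

(* Everything the proof needs about a near triangulation is local: the outer
   cycle C, connectivity, and the link of each vertex v (its neighbours in
   rotation order), which is a path from the successor to the predecessor of v
   on C when v lies on C, and a cycle otherwise, because every inner face is a
   triangle.  Up to relabelling there are finitely many graphs with at most six
   vertices having these local properties; enumerating them with C labelled
   0, ..., k-1, a computation finds for each of them and each pair x, y on C a
   Hamiltonian x-y path or one of the configurations (i)-(iii). *)

From mathcomp Require Import all_boot fingroup perm.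
Set Implicit Arguments. Unset Strict Implicit. Unset Printing Implicit Defensive.

Definition path_between (T : eqType) (e : rel T) (a b : T) (s : seq T) : bool :=
  if s is a' :: s' then [&& a' == a, last a' s' == b & path e a' s'] else false.

Definition cycle_edge (T : eqType) (c : seq T) (u v : T) : bool :=
  ((u \in c) && (v == next c u)) || ((v \in c) && (u == next c v)).

Definition cycle_chord (T : eqType) (adj : rel T) (c : seq T) (u v : T) : bool :=
  [&& adj u v, ~~ cycle_edge c u v, u \in c & v \in c].

Lemma path_between_map (T U : eqType) (g : T -> U) (e : rel T) (e' : rel U) :
    injective g -> (forall u v, e' (g u) (g v) = e u v) ->
  forall a b s, path_between e' (g a) (g b) (map g s) = path_between e a b s.
Proof.
move=> g_inj ge a b; case=> //= a' s.
by rewrite last_map !(inj_eq g_inj) path_map (eq_path ge).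
Qed.

Lemma cycle_edge_map (T U : eqType) (g : T -> U) (c : seq T) :
  injective g -> uniq c -> forall u v, cycle_edge (map g c) (g u) (g v) = cycle_edge c u v.
Proof.
by move=> g_inj uc u v; rewrite /cycle_edge !(mem_map g_inj) !next_map // !(inj_eq g_inj).
Qed.

Lemma sorted_path_between (T : eqType) (e : rel T) x0 s :
  sorted e s -> s != [::] -> path_between e (head x0 s) (last x0 s) s.
Proof. by case: s => //= a s path_s _; rewrite !eqxx. Qed.

Lemma path_between_ham_path (T : finType) (adj : rel T) x y s :
  uniq s -> size s = #|T| -> path_between adj x y s -> ham_path adj x y.
Proof.
by case: s => // a s us ss /and3P[/eqP ax /eqP last_s path_s]; exists s; rewrite -ax.
Qed.

Definition link_path (T : eqType) (adj : rel T) (v a b : T) : Prop :=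
  exists s, [/\ uniq s, s =i adj v & path_between adj a b s].

Definition link_cycle (T : eqType) (adj : rel T) (v : T) : Prop :=
  exists s, [/\ uniq s, s =i adj v & path.cycle adj s].

Lemma link_path_adj (T : eqType) (adj : rel T) v a b : link_path adj v a b -> adj v a.
Proof.
by case=> [[|a' s] [_ mem_s]] //= /and3P[/eqP <- _ _]; have := mem_s a'; rewrite mem_head.
Qed.

Record triangulated_disc (T : finType) (adj : rel T) (c : seq T) : Prop := {
  disc_sym : symmetric adj;
  disc_irr : irreflexive adj;
  disc_connected : forall u v, connect adj u v;
  disc_uniq : uniq c;
  disc_link_outer : {in c, forall v, link_path adj v (next c v) (prev c v)};
  disc_link_inner : {in [predC c], forall v, link_cycle adj v}
}.

Definition ham_path_or_obstruction (T : finType) (adj ch oe : rel T) (x y : T) : Prop :=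
  ham_path adj x y
  \/ ch x y
  \/ (exists z : T,
        [/\ adj x z /\ adj z y, ch x z, ch z y, #|T| = 6 &
            forall a b : T, a \notin [:: x; y; z] -> b \notin [:: x; y; z] -> ~~ adj a b])
  \/ (exists u : 'I_6 -> T,
        [/\ injective u, forall i j, adj (u i) (u j) = hex_tri_adj i j,
            forall i j, oe (u i) (u j) = hex_cyc i j &
            (x, y) = (u ord0, u (inord 3)) \/ (x, y) = (u (inord 3), u ord0)]).

Lemma eq_ham_path_or_obstruction (T : finType) (adj ch ch' oe oe' : rel T) x y :
  ch =2 ch' -> oe =2 oe' ->
  ham_path_or_obstruction adj ch oe x y -> ham_path_or_obstruction adj ch' oe' x y.
Proof.
move=> eq_ch eq_oe [hp|[chxy|[[z [xz chxz chzy n6 indep]]|[u [u_inj u_adj u_oe xy]]]]].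
- by left.
- by right; left; rewrite -eq_ch.
- by right; right; left; exists z; rewrite -!eq_ch.
- by right; right; right; exists u; split=> // i j; rewrite -eq_oe.
Qed.

(* [vm_compute] is call-by-value: [&&], [||], [all] and [has] evaluate all their
   arguments, so the checker below guards its costly tests by [if]s and by these
   short-circuiting variants, and computes [lham_ends] once through a [let]. *)
Fixpoint lazy_all (T : Type) (a : T -> bool) (s : seq T) : bool :=
  if s is x :: s' then if a x then lazy_all a s' else false else true.

Fixpoint lazy_has (T : Type) (a : T -> bool) (s : seq T) : bool :=
  if s is x :: s' then if a x then true else lazy_has a s' else false.

Lemma lazy_allE (T : Type) (a : T -> bool) s : lazy_all a s = all a s.
Proof. by elim: s => //= x s ->; case: (a x). Qed.

Lemma lazy_hasE (T : Type) (a : T -> bool) s : lazy_has a s = has a s.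
Proof. by elim: s => //= x s ->; case: (a x). Qed.

Fixpoint subseqs (T : Type) (s : seq T) : seq (seq T) :=
  if s is a :: s' then let ss := subseqs s' in map (cons a) ss ++ ss else [:: [::]].

Definition lpairs (n : nat) : seq (nat * nat) := [seq (i, j) | j <- iota 0 n, i <- iota 0 j].

Lemma mem_subseqs_filter (T : eqType) (p : pred T) (s : seq T) : filter p s \in subseqs s.
Proof. by elim: s => //= a s IH; case: (p a); rewrite mem_cat ?map_f ?IH ?orbT. Qed.

Lemma mem_lpairs n i j : ((i, j) \in lpairs n) = (i < j < n).
Proof.
apply/allpairsPdep/andP => [[b [a [bn ab [-> ->]]]]|[ij jn]].
  by move: bn ab; rewrite !mem_iota.
by exists j, i; rewrite !mem_iota /= ij jn.
Qed.

(* Unlike [inord] and [ord_enum], which match on the opaque [idP], this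
   computes under [vm_compute]. *)
Definition ord_mod6 (i : nat) : 'I_6 := Ordinal (ltn_pmod i (isT : 0 < 6)).

Lemma ord_mod6K (i : 'I_6) : ord_mod6 i = i.
Proof. by apply: val_inj; rewrite /= modn_small. Qed.

(* A labelled graph has vertices [0, n), edges [E] given as pairs [i < j], and
   outer cycle [0, 1, ..., k-1]. *)
Section LabelledGraph.
Variables (n k : nat) (E : seq (nat * nat)).

Definition ladj (i j : nat) : bool := ((i, j) \in E) || ((j, i) \in E).
Definition lverts : seq nat := iota 0 n.
Definition lcycle : seq nat := iota 0 k.
Definition lnbrs (v : nat) : seq nat := filter (ladj v) lverts.

Definition llink (v : nat) : bool :=
  if v \in lcycle then
    lazy_has (path_between ladj (next lcycle v) (prev lcycle v)) (permutations (lnbrs v))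
  else lazy_has (path.cycle ladj) (permutations (lnbrs v)).

Definition lclosed (S : seq nat) : bool :=
  all (fun i => all (fun j => ladj i j ==> (j \in S)) lverts) S.

Definition lconnected : bool :=
  all (fun S => (0 \in S) ==> lclosed S ==> all (mem S) lverts) (subseqs lverts).

Definition ltriangulated_disc : bool :=
  if all (fun i => ladj i (next lcycle i)) lcycle then
    if lazy_all llink lverts then lconnected else false
  else false.

Definition lham_ends : seq (nat * nat) :=
  [seq (head 0 s, last 0 s) | s <- filter (sorted ladj) (permutations lverts)].

Definition lindep_outside (S : seq nat) : bool :=
  all (fun a => all (fun b => (a \notin S) ==> (b \notin S) ==> ~~ ladj a b) lverts) lverts.

Definition ltwo_chords (x y : nat) : bool :=
  has (fun z => [&& ladj x z, ladj z y, cycle_chord ladj lcycle x z,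
                    cycle_chord ladj lcycle z y, n == 6 & lindep_outside [:: x; y; z]]) lverts.

Definition lhex (u : seq nat) : bool :=
  all (fun i => all (fun j =>
     (ladj (nth 0 u i) (nth 0 u j) == hex_tri_adj (ord_mod6 i) (ord_mod6 j))
     && (cycle_edge lcycle (nth 0 u i) (nth 0 u j) == hex_cyc (ord_mod6 i) (ord_mod6 j)))
   (iota 0 6)) (iota 0 6).

Definition ltri_hexagon (x y : nat) : bool :=
  if n == 6 then
    has (fun u => if (x, y) \in [:: (nth 0 u 0, nth 0 u 3); (nth 0 u 3, nth 0 u 0)]
                  then lhex u else false) (permutations lverts)
  else false.

Definition lconclusion : bool :=
  let ends := lham_ends in
  all (fun x => all (fun y =>
         if [|| x == y, (x, y) \in ends | cycle_chord ladj lcycle x y] then true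
         else if ltwo_chords x y then true else ltri_hexagon x y)
       lcycle) lcycle.

End LabelledGraph.

Definition small_disc_check : bool :=
  all (fun n => all (fun k =>
         all (fun E => if ltriangulated_disc n k E then lconclusion n k E else true)
           (subseqs (lpairs n)))
       (iota 2 n.-1))
    (iota 2 5).

Lemma small_disc_checkT : small_disc_check.
Proof. vm_compute. reflexivity. Qed.

Lemma lconclusion_small n k E :
  2 <= k <= n -> n <= 6 -> E \in subseqs (lpairs n) -> ltriangulated_disc n k E ->
  lconclusion n k E.
Proof.
move=> /andP[k_ge2 k_le_n] n_le6 E_sub tri.
have n_gt0 : 0 < n by apply: leq_trans k_le_n; apply: leq_trans k_ge2.
have /allP/(_ n) := small_disc_checkT.
rewrite mem_iota (leq_trans k_ge2 k_le_n) ltnS => /(_ n_le6) /allP/(_ k).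
rewrite mem_iota k_ge2 add2n prednK // ltnS => /(_ k_le_n) /allP/(_ E E_sub).
by rewrite tri.
Qed.

Section Relabel.
Variables (T : finType) (adj : rel T) (c : seq T) (x y : T).
Hypothesis D : triangulated_disc adj c.

Let n := #|T|.
Let k := size c.
Let L := c ++ [seq t <- enum T | t \notin c].
Let code t := index t L.
Let decode i := nth x L i.
Let E := [seq p <- lpairs n | adj (decode p.1) (decode p.2)].

Let mem_L t : t \in L.
Proof. by rewrite mem_cat mem_filter mem_enum andbT orbN. Qed.

Let L_uniq : uniq L.
Proof.
rewrite cat_uniq (disc_uniq D) filter_uniq ?enum_uniq // andbT.
by apply/hasPn => t; rewrite mem_filter => /andP[].
Qed.

Let size_L : size L = n.
Proof.
rewrite /n cardE; apply/perm_size/uniq_perm; rewrite ?enum_uniq // => t.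
by rewrite mem_L mem_enum.
Qed.

Let n_gt0 : 0 < n.
Proof. by apply/card_gt0P; exists x. Qed.

Let codeK : cancel code decode.
Proof. by move=> t; apply: nth_index. Qed.

Let decodeK i : i < n -> code (decode i) = i.
Proof. by move=> lt_in; rewrite /code /decode index_uniq ?size_L. Qed.

Let code_inj : injective code.
Proof. exact: can_inj codeK. Qed.

Let code_lt t : code t < n.
Proof. by rewrite /code -size_L index_mem. Qed.

Let code_lverts t : code t \in lverts n.
Proof. by rewrite mem_iota code_lt. Qed.

Let map_code_c : map code c = lcycle k.
Proof.
have uc := disc_uniq D.
have -> : map code c = map (index^~ c) c by apply/eq_in_map => t tc; rewrite /code index_cat tc.
rewrite -[c in map _ c](mkseq_nth x) /mkseq -map_comp; apply: map_id_in => i.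
by rewrite mem_iota /= => lt_ik; rewrite index_uniq.
Qed.

Let ladj_code u v : ladj E (code u) (code v) = adj u v.
Proof.
have memE p : (p \in E) = adj (decode p.1) (decode p.2) && (p \in lpairs n).
  by rewrite mem_filter.
rewrite /ladj !memE !mem_lpairs !code_lt !andbT /= !codeK.
case: ltngtP => [||/code_inj ->]; rewrite ?andbT ?andbF ?orbF //=.
  by rewrite (disc_sym D).
by rewrite (disc_irr D).
Qed.

Let map_code_decode s : all (gtn n) s -> map code (map decode s) = s.
Proof. by move=> /allP lt_sn; rewrite -map_comp map_id_in // => i /lt_sn /decodeK. Qed.

Let perm_lverts_lt s : perm_eq s (lverts n) -> all (gtn n) s.
Proof. by move=> perm_s; apply/allP => i; rewrite (perm_mem perm_s) mem_iota. Qed.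

Let lnbrs_code v s : uniq s -> s =i adj v -> perm_eq (map code s) (lnbrs n E (code v)).
Proof.
move=> us mem_s; apply: uniq_perm; rewrite ?(map_inj_uniq code_inj) ?filter_uniq ?iota_uniq //.
move=> i; rewrite mem_filter mem_iota /=; apply/mapP/andP => [[t]|[adj_vi lt_in]].
  by rewrite mem_s => adj_vt ->; rewrite ladj_code code_lt.
rewrite -(decodeK lt_in) ladj_code in adj_vi.
by exists (decode i); rewrite ?decodeK ?mem_s.
Qed.

Let lcycle_edges : all (fun i => ladj E i (next (lcycle k) i)) (lcycle k).
Proof.
rewrite -map_code_c all_map; apply/allP => v vc /=.
by rewrite next_map ?(disc_uniq D) // ladj_code (link_path_adj (disc_link_outer D vc)).
Qed.

Let llinks : all (llink n k E) (lverts n).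
Proof.
apply/allP => i; rewrite mem_iota /= => /decodeK <-; set v := decode i.
rewrite /llink -map_code_c mem_map // !lazy_hasE.
have uc := disc_uniq D.
case: ifP => [vc | /negbT vc].
  have [s [us mem_s path_s]] := disc_link_outer D vc.
  apply/hasP; exists (map code s); first by rewrite mem_permutations lnbrs_code.
  by rewrite !(next_map, prev_map) // (path_between_map code_inj ladj_code).
have [s [us mem_s cycle_s]] := disc_link_inner D vc.
apply/hasP; exists (map code s); first by rewrite mem_permutations lnbrs_code.
by rewrite cycle_map (eq_cycle ladj_code).
Qed.

Let lconnected_code : lconnected n E.
Proof.
apply/allP => S _; apply/implyP => S0; apply/implyP => /allP closed_S.
apply/allP => i; rewrite mem_iota /= => /decodeK <-.
have /connectP[p path_p ->] := disc_connected D (decode 0) (decode i).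
rewrite -(decodeK n_gt0) in S0.
elim: p (decode 0) path_p S0 => //= t p IH u /andP[adj_ut path_p] Su.
apply: IH path_p _; have /allP := closed_S _ Su.
by move=> /(_ (code t)); rewrite mem_iota code_lt ladj_code adj_ut; apply.
Qed.

Let ltriangulated_disc_code : ltriangulated_disc n k E.
Proof. by rewrite /ltriangulated_disc lcycle_edges lazy_allE llinks lconnected_code. Qed.

Let lham_decode : (code x, code y) \in lham_ends n E -> ham_path adj x y.
Proof.
case/mapP => s; rewrite mem_filter mem_permutations => /andP[sorted_s perm_s] [hx ly].
have size_s : size s = n by rewrite (perm_size perm_s) size_iota.
have s_nil : s != [::] by rewrite -size_eq0 size_s -lt0n.
have := sorted_path_between 0 sorted_s s_nil; rewrite -hx -ly.
have lt_s := perm_lverts_lt perm_s.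
rewrite -(map_code_decode lt_s) (path_between_map code_inj ladj_code) => path_s.
apply: path_between_ham_path path_s; last by rewrite size_map.
by rewrite -(map_inj_uniq code_inj) map_code_decode // (perm_uniq perm_s) iota_uniq.
Qed.

Let cycle_chord_code u v :
  cycle_chord (ladj E) (lcycle k) (code u) (code v) = cycle_chord adj c u v.
Proof.
rewrite -map_code_c /cycle_chord ladj_code (cycle_edge_map code_inj (disc_uniq D)).
by rewrite !(mem_map code_inj).
Qed.

Let ltwo_chords_decode : ltwo_chords n k E (code x) (code y) ->
  exists z, [/\ adj x z /\ adj z y, cycle_chord adj c x z, cycle_chord adj c z y, #|T| = 6 &
    forall a b, a \notin [:: x; y; z] -> b \notin [:: x; y; z] -> ~~ adj a b].
Proof.
case/hasP => i; rewrite mem_iota /= => /decodeK <-; set z := decode i.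
rewrite !ladj_code !cycle_chord_code => /and5P[xz zy chord_xz chord_zy /andP[/eqP n6 indep]].
exists z; split => // a b a_xyz b_xyz.
have /allP/(_ (code b) (code_lverts b)) := allP indep (code a) (code_lverts a).
by rewrite -[[:: code x; _; _]]/(map code [:: x; y; z]) !(mem_map code_inj) a_xyz b_xyz ladj_code.
Qed.

Let ltri_hexagon_decode : ltri_hexagon n k E (code x) (code y) ->
  exists u : 'I_6 -> T,
    [/\ injective u, forall i j, adj (u i) (u j) = hex_tri_adj i j,
        forall i j, cycle_edge c (u i) (u j) = hex_cyc i j &
        (x, y) = (u ord0, u (inord 3)) \/ (x, y) = (u (inord 3), u ord0)].
Proof.
rewrite /ltri_hexagon; case: eqP => // n6 /hasP[s]; rewrite mem_permutations => perm_s.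
case: ifP => // xy_s /allP hex_s.
have size_s : size s = 6 by rewrite (perm_size perm_s) size_iota.
have mem_iota6 (i : 'I_6) : nat_of_ord i \in iota 0 6 by rewrite mem_iota /= ltn_ord.
have s_code (i : nat) : i < 6 -> nth 0 s i = code (decode (nth 0 s i)).
  move=> lt_i6; rewrite decodeK //; apply: (allP (perm_lverts_lt perm_s)).
  by rewrite mem_nth ?size_s.
exists (fun i => decode (nth 0 s i)); split.
- move=> i j /(congr1 code); rewrite -!s_code // => /eqP.
  by rewrite nth_uniq ?size_s ?(perm_uniq perm_s) ?iota_uniq // => /eqP /val_inj.
- move=> i j; rewrite -ladj_code -!s_code //.
  have /allP/(_ j (mem_iota6 j))/andP[/eqP] := hex_s i (mem_iota6 i).
  by rewrite !ord_mod6K.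
- move=> i j; rewrite -(cycle_edge_map code_inj (disc_uniq D)) map_code_c -!s_code //.
  have /allP/(_ j (mem_iota6 j))/andP[_ /eqP] := hex_s i (mem_iota6 i).
  by rewrite !ord_mod6K.
- rewrite inordK // !inE !xpair_eqE in xy_s *.
  by case/orP: xy_s => /andP[/eqP <- /eqP <-]; [left | right]; rewrite !codeK.
Qed.

Lemma triangulated_disc_ham_path : #|T| <= 6 -> x \in c -> y \in c -> x != y ->
  ham_path_or_obstruction adj (cycle_chord adj c) (cycle_edge c) x y.
Proof.
move=> n_le6 xc yc xy.
have k_ge2 : 2 <= k.
  apply: (@uniq_leq_size _ [:: x; y]) => [|t]; first by rewrite /= inE andbT.
  by rewrite !inE => /orP[] /eqP ->.
have k_range : 2 <= k <= n by rewrite k_ge2 -size_L size_cat leq_addr.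
have := lconclusion_small k_range n_le6 (mem_subseqs_filter _ _) ltriangulated_disc_code.
have code_c t : t \in c -> code t \in lcycle k by move=> tc; rewrite -map_code_c map_f.
move=> /allP/(_ _ (code_c x xc))/allP/(_ _ (code_c y yc)).
rewrite (inj_eq code_inj) (negbTE xy) /=.
rewrite /ham_path_or_obstruction; case: ifP => [/orP[hp|ch] _|_].
- by left; apply: lham_decode.
- by right; left; rewrite -cycle_chord_code.
case: ifP => [ii _|_ iii].
- by right; right; left; apply: ltwo_chords_decode.
- by right; right; right; apply: ltri_hexagon_decode.
Qed.

End Relabel.

Lemma path_frel_sub (T : eqType) (f : T -> T) (e : rel T) a s :
  {in belast a s, forall b, e b (f b)} -> path (frel f) a s -> path e a s.
Proof.
elim: s a => //= b s IH a e_f /andP[/eqP fab path_s]; apply/andP; split.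
  by rewrite -fab e_f ?mem_head.
by apply: IH path_s => t t_in; rewrite e_f // inE t_in orbT.
Qed.

Definition outer_walk (T : finType) (rot : T -> {perm T}) (d0 : T * T) : seq T :=
  [seq d.1 | d <- orbit (phi rot) d0].

Lemma phi_inj (T : finType) (rot : T -> {perm T}) : injective (phi rot).
Proof. by move=> [a b] [a' b'] [eb]; rewrite -eb => /perm_inj ->. Qed.

Lemma mem_face (T : finType) (rot : T -> {perm T}) e d :
  (d \in face rot e) = (d \in orbit (phi rot) e).
Proof. by rewrite inE fconnect_orbit. Qed.

Lemma outer_vertsE (T : finType) (rot : T -> {perm T}) (d0 : T * T) :
  outer_verts rot d0 =i outer_walk rot d0.
Proof.
move=> u; apply/imsetP/mapP => [[d]|[d]]; rewrite ?mem_face => d_outer ->.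
  by exists d.
by exists d; rewrite ?mem_face.
Qed.

Section NearTriangulation.
Variables (T : finType) (adj : rel T) (rot : T -> {perm T}) (d0 : T * T).
Hypothesis NT : near_triangulation adj rot d0.

Local Notation c := (outer_walk rot d0).
Local Notation outer := (orbit (phi rot) d0).

Let adj_sym : symmetric adj. Proof. by case: NT => [[[]]]. Qed.
Let adj_irr : irreflexive adj.
Proof. by case: NT => [[[_ irr] _ _ _] _ _ _] u; apply/negbTE/irr. Qed.

Let adj_rot v u : adj v u -> adj v (rot v u).
Proof. by case: NT => [[_ [rot_adj _] _ _] _ _ _]; apply: rot_adj. Qed.

Let adj_orbit_rot v a : adj v a -> orbit (rot v) a =i adj v.
Proof.
move=> adj_va b; rewrite -fconnect_orbit; apply/idP/idP => [/connectP[p p_path ->]|adj_vb].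
  by elim: p a p_path adj_va => //= a' p IH a /andP[/eqP <-] /IH IHp /adj_rot.
by case: NT => [[_ [_]]] /(_ v a b adj_va adj_vb).
Qed.

Let outer_adj d : d \in outer -> adj d.1 d.2.
Proof.
move=> /trajectP[i _ ->]; case: NT => _ /[!inE] + _ _.
by elim: i => //= i IH /IH adj_i; apply: adj_rot; rewrite adj_sym.
Qed.

Let fst_outer_inj : {in outer &, injective fst}.
Proof. by case: NT => _ _ fst_inj _ d d'; rewrite -!mem_face; apply: fst_inj. Qed.

Lemma outer_walk_uniq : uniq c.
Proof. by rewrite map_inj_in_uniq ?orbit_uniq. Qed.

Lemma next_outer_walk d : d \in outer -> next c d.1 = d.2.
Proof.
move=> d_outer; pose R a b := (a, b) \in outer.
have cycle_R : path.cycle R c.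
  rewrite cycle_map; apply: (sub_in_cycle (P := mem outer) (e := frel (phi rot))).
  - by move=> e e' e_outer _ /eqP <-; rewrite /R /= -surjective_pairing.
  - exact/allP.
  - by apply: cycle_orbit; apply: phi_inj.
have /(next_cycle cycle_R) := map_f fst d_outer.
by rewrite /R => /fst_outer_inj/(_ d_outer) <-.
Qed.

Lemma mem_outer_face u v : ((u, v) \in outer) = (u \in c) && (v == next c u).
Proof.
apply/idP/andP => [uv_outer|[/mapP[d d_outer ->] /eqP ->]].
  by rewrite (next_outer_walk uv_outer) (map_f fst uv_outer).
by rewrite (next_outer_walk d_outer) -surjective_pairing.
Qed.

Lemma outer_edgeE : outer_edge rot d0 =2 cycle_edge c.
Proof. by move=> u v; rewrite /outer_edge !mem_face !mem_outer_face. Qed.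

Lemma chordE : chord adj rot d0 =2 cycle_chord adj c.
Proof. by move=> u v; rewrite /chord /cycle_chord outer_edgeE !outer_vertsE. Qed.

(* The face of an inner dart (a, v) is the triangle (a, v), (v, w), (w, a)
   with w = rot v a, and (w, a) is a dart. *)
Let inner_triangle a v : adj a v -> (a, v) \notin outer -> adj a (rot v a).
Proof.
move=> adj_av av_inner; set w := rot v a.
have adj_vw : adj v w by apply: adj_rot; rewrite adj_sym.
have adj_w_rot : adj w (rot w v) by apply: adj_rot; rewrite adj_sym.
have order3 : fingraph.order (phi rot) (a, v) = 3.
  case: NT => _ _ _ /(_ (a, v)); rewrite inE mem_face => /(_ adj_av av_inner) <-.
  by rewrite /fingraph.order -cardsE.
have := iter_order (@phi_inj _ rot) (a, v); rewrite order3 /phi /= -/w => [[<- _]].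
by rewrite adj_sym.
Qed.

Lemma link_cycle_inner v : v \notin c -> link_cycle adj v.
Proof.
move=> v_inner; case: (pickP (adj v)) => [a adj_va|no_nbr]; last first.
  by exists [::]; split=> // u; rewrite -[u \in adj v]/(adj v u) no_nbr.
exists (orbit (rot v) a); split; [exact: orbit_uniq | exact: adj_orbit_rot |].
apply: (sub_in_cycle (P := mem (orbit (rot v) a)) (e := frel (rot v))); last first.
- exact/cycle_orbit/perm_inj.
- exact/allP.
move=> b _ b_orbit _ /eqP <-.
have adj_vb : adj v b by move: b_orbit; rewrite (adj_orbit_rot adj_va).
apply: inner_triangle; first by rewrite adj_sym.
by rewrite mem_outer_face; apply: contra v_inner => /andP[b_outer /eqP ->]; rewrite mem_next.
Qed.

Lemma link_path_outer v : v \in c -> link_path adj v (next c v) (prev c v).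
Proof.
move=> v_outer; have uc := outer_walk_uniq.
have adj_va : adj v (next c v).
  by have := outer_adj (d := (v, next c v)); apply; rewrite mem_outer_face v_outer eqxx.
have rot_prev : rot v (prev c v) = next c v.
  have pv_outer : (prev c v, v) \in outer.
    by rewrite mem_outer_face mem_prev v_outer (next_prev uc) eqxx.
  by have /next_outer_walk /= -> := mem_orbit (f := phi rot) pv_outer.
exists (orbit (rot v) (next c v)); split; [exact: orbit_uniq | exact: adj_orbit_rot |].
have := cycle_orbit (@perm_inj _ (rot v)) (next c v).
have := orbit_uniq (rot v) (next c v).
rewrite /orbit -orderSpred /= rcons_path; set s := traject _ _ _.
move=> uniq_s /andP[frel_s /eqP last_s].
have {}last_s : last (next c v) s = prev c v by apply: (@perm_inj _ (rot v)); rewrite last_s.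
rewrite /path_between eqxx last_s eqxx; apply: path_frel_sub frel_s => b b_in.
have adj_vb : adj v b.
  have : b \in orbit (rot v) (next c v).
    by rewrite /orbit -orderSpred /= -/s lastI mem_rcons inE b_in orbT.
  by rewrite (adj_orbit_rot adj_va).
apply: inner_triangle; first by rewrite adj_sym.
rewrite mem_outer_face; apply: contraL b_in => /andP[_ /eqP v_next].
have -> : b = prev c v by rewrite v_next (prev_next uc).
by move: uniq_s; rewrite -[_ && _]/(uniq (_ :: s)) lastI rcons_uniq last_s => /andP[].
Qed.

Lemma near_triangulation_disc : triangulated_disc adj c.
Proof.
split; [exact: adj_sym | exact: adj_irr | | exact: outer_walk_uniq | exact: link_path_outer |].
  by case: NT => [[_ _ conn _] _ _ _].
by move=> v; rewrite inE; apply: link_cycle_inner.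
Qed.

End NearTriangulation.

Theorem lemma3p2 (T : finType) (adj : rel T) (rot : T -> {perm T})
    (d0 : T * T) (x y : T) :
  near_triangulation adj rot d0 ->
  #|T| <= 6 ->
  x \in outer_verts rot d0 -> y \in outer_verts rot d0 -> x != y ->
  ham_path adj x y
  \/ chord adj rot d0 x y
  \/ (exists z : T,
        [/\ adj x z /\ adj z y, chord adj rot d0 x z, chord adj rot d0 z y,
            #|T| = 6 &
            forall a b : T, a \notin [:: x; y; z] -> b \notin [:: x; y; z] ->
              ~~ adj a b])
  \/ (exists u : 'I_6 -> T,
        [/\ injective u,
            forall i j, adj (u i) (u j) = hex_tri_adj i j,
            forall i j, outer_edge rot d0 (u i) (u j) = hex_cyc i j &
            (x, y) = (u ord0, u (inord 3)) \/ (x, y) = (u (inord 3), u ord0)]).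
Proof.
move=> NT n_le6; rewrite !outer_vertsE => xc yc xy.
apply: (eq_ham_path_or_obstruction _ _
  (triangulated_disc_ham_path (near_triangulation_disc NT) n_le6 xc yc xy)).
- by move=> u v; rewrite (chordE NT).
- by move=> u v; rewrite (outer_edgeE NT).
Qed.
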